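(* Let $X$ be a bornological coarse space with bornology $\mathcal{B}$, and let $\bar X$ be a Higson-dominated compactification of $X$ with boundary $Y$. Suppose given a neighbourhood $U$ of $Y$ in $\bar X$ with a retraction $r\colon U\to Y$, a proper, bornological and controlled function $s\colon X\to[0,\infty)$, and a point $y_0\in Y$. Define $\psi\colon X\to[0,\infty)\times Y$ by $\psi(x):=(s(x),y_0)$ if $x\notin p^{-1}(U)$ and $\psi(x):=(s(x),r(p(x)))$ if $x\in p^{-1}(U)$. Then $\psi\colon X\to\mathcal{O}(Y)$ is a morphism of bornological coarse spaces.
   Context: A bornological coarse space is a set with a coarse structure and compatible bornology; morphisms are controlled (images of entourages are entourages) and proper (preimages of bounded sets are bounded). Let $\ell^\infty_{\mathcal{B}}(X)$ be the $C^*$-algebra of bounded functions $f$ on $X$ such that for every entourage $U$, $\sup\{|f(x)-f(x')|:(x,x')\in U,\ x,x'\notin B\}\to0$ along bounded $B$, and $\ell^\infty(\mathcal{B})$ the ideal of bounded functions with $\sup_{X\setminus B}|f|\to0$ along bounded $B$. A Higson-dominated compactification is given by a closed unital subalgebra $A$ with $\ell^\infty(\mathcal{B})\subseteq A\subseteq\ell^\infty_{\mathcal{B}}(X)$: $\bar X$ is the Gelfand dual of $A$ (a compact Hausdorff space), the boundary $Y$ is the Gelfand dual of $A/\ell^\infty(\mathcal{B})$ (a closed subspace of $\bar X$), and $p\colon X\to\bar X$ sends $x$ to the character $f\mapsto f(x)$. A function $s\colon X\to[0,\infty)$ is proper if preimages of bounded sets are bounded, bornological if images of bounded sets are bounded,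 and controlled if $\sup_{(x,x')\in W}|s(x)-s(x')|<\infty$ for every entourage $W$. $Y$ carries the maximal coarse structure and bornology and the uniform structure of all neighbourhoods of the diagonal. $\mathcal{O}(Y)$ is $[0,\infty)\times Y$ with the bornology whose bounded sets are those contained in $[0,R]\times Y$ for some $R$, and whose entourages are the subsets $U$ of $([0,\infty)\times Y)^2$ with $\sup_{((t,y),(t',y'))\in U}|t-t'|<\infty$ such that for every neighbourhood $V$ of the diagonal of $Y$ there is $S$ with $(y,y')\in V$ whenever $((t,y),(t',y'))\in U$ and $t,t'\ge S$. *)

From HB Require Import structures.
From mathcomp Require Import all_boot all_algebra.
From mathcomp Require Import complex.
From mathcomp Require Import all_classical all_reals.
From mathcomp Require Import Rstruct.
Set Implicit Arguments. Unset Strict Implicit. Unset Printing Implicit Defensive.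
Import GRing.Theory Num.Theory.
Local Open Scope classical_set_scope.
Local Open Scope ring_scope.

Notation Rr := Rdefinitions.R.
Definition Cx := (Rdefinitions.R)[i].

Record coarse_structure (X : Type) (E : set (set (X * X))) : Prop := {
  cs_diag : E [set xy | xy.1 = xy.2];
  cs_sub : forall U V, E U -> V `<=` U -> E V;
  cs_union : forall U V, E U -> E V -> E (U `|` V);
  cs_inv : forall U, E U -> E [set xy | U (xy.2, xy.1)];
  cs_comp : forall U V, E U -> E V ->
    E [set xy | exists z, U (xy.1, z) /\ V (z, xy.2)] }.

Record bornology (X : Type) (B : set (set X)) : Prop := {
  bo_cover : forall x, B [set x];
  bo_sub : forall S T, B S -> T `<=` S -> B T;
  bo_union : forall S T, B S -> B T -> B (S `|` T) }.

Definition thickening (X : Type) (U : set (X * X)) (S : set X) : set X :=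
  [set x | exists b, S b /\ U (x, b)].

Record bornological_coarse (X : Type) (E : set (set (X * X))) (B : set (set X))
  : Prop := {
  bc_coarse : coarse_structure E;
  bc_born : bornology B;
  bc_compat : forall U S, E U -> B S -> B (thickening U S) }.

Definition bc_morphism (X Z : Type) (EX : set (set (X * X))) (BX : set (set X))
  (EZ : set (set (Z * Z))) (BZ : set (set Z)) (f : X -> Z) : Prop :=
  (forall U, EX U -> EZ [set zz | exists xx, U xx /\ zz = (f xx.1, f xx.2)]) /\
  (forall S, BZ S -> BX (f @^-1` S)).

Definition bounded_fun (X : Type) (f : X -> Cx) : Prop :=
  exists M : Rr, forall x, `|f x| <= (M%:C)%C.

Definition linfB (X : Type) (E : set (set (X * X))) (B : set (set X))
  : set (X -> Cx) := fun f =>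
  bounded_fun f /\
  forall U, E U -> forall eps : Rr, 0 < eps -> exists S, B S /\
    forall x x', U (x, x') -> ~ S x -> ~ S x' -> `|f x - f x'| <= (eps%:C)%C.

Definition linf0 (X : Type) (B : set (set X)) : set (X -> Cx) := fun f =>
  bounded_fun f /\
  forall eps : Rr, 0 < eps -> exists S, B S /\ forall x, ~ S x -> `|f x| <= (eps%:C)%C.

Record higson_dominated_alg (X : Type) (E : set (set (X * X))) (B : set (set X))
  (A : set (X -> Cx)) : Prop := {
  hd_lower : linf0 B `<=` A;
  hd_upper : A `<=` linfB E B;
  hd_unit : A (fun _ => 1);
  hd_add : forall f g, A f -> A g -> A (fun x => f x + g x);
  hd_mul : forall f g, A f -> A g -> A (fun x => f x * g x);
  hd_scale : forall (c : Cx) f, A f -> A (fun x => c * f x);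
  hd_conj : forall f, A f -> A (fun x => (f x)^*);
  hd_closed : forall f : X -> Cx,
    (forall eps : Rr, 0 < eps -> exists g, A g /\ forall x, `|f x - g x| <= (eps%:C)%C) ->
    A f }.

(** A point of the Gelfand dual of A is a character of A; we
    represent it by a functional on all of X -> Cx that is zero outside A
    (so that characters of A are represented uniquely). *)
Definition character (X : Type) (A : set (X -> Cx)) (phi : (X -> Cx) -> Cx) : Prop :=
  [/\ (forall f, ~ A f -> phi f = 0),
      phi (fun _ => 1) = 1,
      (forall f g, A f -> A g -> phi (fun x => f x + g x) = phi f + phi g),
      (forall f g, A f -> A g -> phi (fun x => f x * g x) = phi f * phi g) &
      (forall (c : Cx) f, A f -> phi (fun x => c * f x) = c * phi f)].

Definition compactif (X : Type) (A : set (X -> Cx)) : set ((X -> Cx) -> Cx) :=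
  character A.

(** boundary Y = Gelfand dual of A / l^infty(B) = characters vanishing on l^infty(B) *)
Definition boundary (X : Type) (B : set (set X)) (A : set (X -> Cx))
  : set ((X -> Cx) -> Cx) :=
  fun phi => character A phi /\ forall f, linf0 B f -> phi f = 0.

Definition pmap (X : Type) (A : set (X -> Cx)) (x : X) : (X -> Cx) -> Cx :=
  fun f => if pselect (A f) then f x else 0.

Definition wopen (X : Type) (A : set (X -> Cx)) (O : set ((X -> Cx) -> Cx)) : Prop :=
  O `<=` compactif A /\
  forall phi, O phi -> exists (fs : seq (X -> Cx)) (eps : Rr),
    [/\ 0 < eps, (forall f, List.In f fs -> A f) &
      forall psi, compactif A psi ->
        (forall f, List.In f fs -> `|psi f - phi f| < (eps%:C)%C) -> O psi].

Definition wopen2 (X : Type) (A : set (X -> Cx))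
  (O : set (((X -> Cx) -> Cx) * ((X -> Cx) -> Cx))) : Prop :=
  O `<=` compactif A `*` compactif A /\
  forall a b, O (a, b) -> exists O1 O2,
    [/\ wopen A O1, wopen A O2, O1 a, O2 b &
      forall c d, O1 c -> O2 d -> O (c, d)].

Definition nbhd_of (X : Type) (A : set (X -> Cx)) (Y U : set ((X -> Cx) -> Cx)) : Prop :=
  U `<=` compactif A /\ exists O, [/\ wopen A O, Y `<=` O & O `<=` U].

(** r : U -> Y is a retraction (continuous, identity on Y); topologies on U and
    Y are the subspace topologies of bar X. *)
Definition retraction (X : Type) (A : set (X -> Cx)) (Y U : set ((X -> Cx) -> Cx))
  (r : ((X -> Cx) -> Cx) -> ((X -> Cx) -> Cx)) : Prop :=
  [/\ forall u, U u -> Y (r u),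
      forall y, Y y -> r y = y &
      forall O, wopen A O -> exists O', wopen A O' /\
        forall u, U u -> (O (r u) <-> O' u)].

Definition diag_nbhd (X : Type) (A : set (X -> Cx)) (Y : set ((X -> Cx) -> Cx))
  (V : set (((X -> Cx) -> Cx) * ((X -> Cx) -> Cx))) : Prop :=
  V `<=` Y `*` Y /\
  exists O, [/\ wopen2 A O, (forall y, Y y -> O (y, y)) &
    forall a b, Y a -> Y b -> O (a, b) -> V (a, b)].

Definition OY_point (X : Type) (Y : set ((X -> Cx) -> Cx)) (q : Rr * ((X -> Cx) -> Cx))
  : Prop := 0 <= q.1 /\ Y q.2.

Definition OY_ent (X : Type) (A : set (X -> Cx)) (Y : set ((X -> Cx) -> Cx))
  (W : set ((Rr * ((X -> Cx) -> Cx)) * (Rr * ((X -> Cx) -> Cx)))) : Prop :=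
  [/\ (forall a b, W (a, b) -> OY_point Y a /\ OY_point Y b),
      (exists K : Rr, forall a b, W (a, b) -> `|a.1 - b.1| <= K) &
      (forall V, diag_nbhd A Y V -> exists S : Rr, forall a b, W (a, b) ->
          S <= a.1 -> S <= b.1 -> V (a.2, b.2))].

Definition OY_bdd (X : Type) (Y : set ((X -> Cx) -> Cx))
  (S : set (Rr * ((X -> Cx) -> Cx))) : Prop :=
  S `<=` OY_point Y /\ exists R0 : Rr, forall q, S q -> q.1 <= R0.

Definition nonneg_fun (X : Type) (s : X -> Rr) : Prop := forall x, 0 <= s x.

Definition proper_fun (X : Type) (B : set (set X)) (s : X -> Rr) : Prop :=
  forall S : set Rr, S `<=` [set t | 0 <= t] -> (exists R0 : Rr, forall t, S t -> t <= R0) ->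
    B (s @^-1` S).

Definition bornological_fun (X : Type) (B : set (set X)) (s : X -> Rr) : Prop :=
  forall S, B S -> exists R0 : Rr, forall x, S x -> s x <= R0.

Definition controlled_fun (X : Type) (E : set (set (X * X))) (s : X -> Rr) : Prop :=
  forall U, E U -> exists K : Rr, forall x x', U (x, x') -> `|s x - s x'| <= K.

Definition psi_map (X : Type) (A : set (X -> Cx)) (U : set ((X -> Cx) -> Cx))
  (r : ((X -> Cx) -> Cx) -> ((X -> Cx) -> Cx)) (s : X -> Rr) (y0 : (X -> Cx) -> Cx)
  (x : X) : Rr * ((X -> Cx) -> Cx) :=
  (s x, if pselect (U (pmap A x)) then r (pmap A x) else y0).

From Pilot Require Import Defs.
From HB Require Import structures.
From mathcomp Require Import all_boot all_algebra complex.
From mathcomp Require Import all_classical all_reals Rstruct.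
From mathcomp Require Import topology normedtype.
From mathcomp Require Import lra.
Import order.Order.TTheory GRing.Theory Num.Theory numFieldNormedType.Exports.
Set Implicit Arguments.
Unset Strict Implicit.
Unset Printing Implicit Defensive.

Local Open Scope classical_set_scope.
Local Open Scope ring_scope.
Local Open Scope complex_scope.

(* The first coordinate of psi is s, so properness of psi and the bound on
   |s x - s x'| along an entourage come from s. The real content is the cone
   condition: for an entourage W and a neighbourhood V of the diagonal of Y,
   pairs in W far enough out have V-close second coordinates. Otherwise the
   bad pairs generate a filter, and along an ultrafilter refining it both
   coordinates converge in the Gelfand dual, since bounded functions have
   limits along ultrafilters. The two limits lie in Y because the pairs leave
   every bounded set, and they coincide because the functions of A have
   vanishing variation along W. Near this common limit point both p x and p x'
   lie in U, and continuity of r makes r (p x) and r (p x') V-close, contrary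
   to the choice of the pairs. *)

Lemma ultra_fmap {T U : Type} (f : T -> U) {G : set_system T} :
  UltraFilter G -> UltraFilter (f @ G).
Proof.
move=> UG; split=> [|H PH sGH]; first exact: fmap_proper_filter.
apply/seteqP; split=> [A HA|]; last exact: sGH.
have [//|GnA] := in_ultra_setVsetC (f @^-1` A) UG.
have /(filterI HA) : H (~` A) by apply: sGH; rewrite /fmap /= preimage_setC.
by rewrite setICr => /filter_ex[].
Qed.

Lemma ultra_cvg_compact {T : Type} {V : topologicalType} {G : set_system T}
    (f : T -> V) (K : set V) :
  UltraFilter G -> compact K -> (forall t, K (f t)) ->
  exists l : V, f @ G --> l.
Proof.
move=> UG; rewrite compact_ultra => /(_ (f @ G) (ultra_fmap f UG)) cK fK.
by have [l [_ fl]] := cK (filterE _ fK); exists l.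
Qed.

Lemma filter_from_ultra {I T : Type} (D : I -> set T) :
  (exists _ : I, True) -> (forall i j, exists k, D k `<=` D i `&` D j) ->
  (forall i, D i !=set0) -> exists G, UltraFilter G /\ forall i, G (D i).
Proof.
move=> I0 DI D0.
have PD : ProperFilter (filter_from setT D).
  apply: filter_from_proper => [|i _]; last exact: D0.
  exact: filter_fromT_filter.
have [G [UG sDG]] := ultraFilterLemma PD.
by exists G; split=> // i; apply: sDG; exists i.
Qed.

Lemma filter_In_all {T I : Type} {G : set_system T} {FG : Filter G}
    (P : I -> set T) (s : seq I) :
  (forall i, List.In i s -> G (P i)) ->
  G [set t | forall i, List.In i s -> P i t].
Proof.
elim: s => [|i s IHs] Gs; first by apply: filterE => t i [].
have Gs' j : List.In j s -> G (P j) by move=> js; apply: Gs; right.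
apply: filterS2 (Gs i (or_introl erefl)) (IHs Gs').
by move=> t Pit Pst j /= [<- //|]; exact: Pst.
Qed.

Section ComplexNorm.
Variable R : rcfType.
Implicit Types (k : R) (z : R[i]).

Lemma normc_real k : `|k%:C| = `|k|%:C.
Proof. by rewrite normc_def /= expr0n addr0 sqrtr_sqr. Qed.

Lemma normc_i : `|'i%C| = 1 :> R[i].
Proof. by rewrite normc_def /= expr0n add0r expr1n sqrtr1. Qed.

Lemma normc_ge_Im z : `|complex.Im z|%:C <= `|z|.
Proof.
by rewrite -normrN -ReiNIm -[`|z|]mulr1 -normc_i -normrM normc_ge_Re.
Qed.

Lemma normc_le_ReIm z : `|z| <= (`|complex.Re z| + `|complex.Im z|)%:C.
Proof.
rewrite {1}[z]complexE rmorphD /= -!normc_real.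
by rewrite (le_trans (ler_normD _ _)) // normrM normc_i mul1r.
Qed.

Lemma gtc0E z : 0 < z -> z = (complex.Re z)%:C /\ 0 < complex.Re z.
Proof. by case: z => a b; rewrite ltcE /= => /andP[/eqP -> a0]. Qed.

End ComplexNorm.

(* [Cx] carries its norm topology only through its [numFieldType] structure. *)
Notation Cn := (Cx : numFieldType).

Section ComplexLimits.
Context {T : Type} {G : set_system T}.

Lemma cvgCP {FG : Filter G} (f : T -> Cn) (a : Cn) :
  f @ G --> a <-> forall e : Rr, 0 < e -> \forall t \near G, `|f t - a| < e%:C.
Proof.
rewrite cvgrPdistC_lt; split=> [cvf e e0|cvf e /gtc0E[-> e0]]; last exact: cvf.
by apply: cvf; rewrite ltcR.
Qed.

Lemma cvgCP_le {FG : Filter G} (f : T -> Cn) (a : Cn) :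
  f @ G --> a <-> forall e : Rr, 0 < e -> \forall t \near G, `|f t - a| <= e%:C.
Proof.
rewrite cvgrPdistC_le; split=> [cvf e e0|cvf e /gtc0E[-> e0]]; last exact: cvf.
by apply: cvf; rewrite ltcR.
Qed.

Lemma cvgC_unique {FG : ProperFilter G} {f : T -> Cn} {a b : Cn} :
  f @ G --> a -> f @ G --> b -> a = b.
Proof. exact: cvg_unique. Qed.

Lemma cvgC_ReIm {FG : Filter G} (f : T -> Cn) (a : Cn) :
  (fun t => complex.Re (f t)) @ G --> complex.Re a ->
  (fun t => complex.Im (f t)) @ G --> complex.Im a -> f @ G --> a.
Proof.
move=> /cvgrPdistC_lt cvRe /cvgrPdistC_lt cvIm; apply/cvgCP => e e0.
have ReB (z w : Cx) : complex.Re (z - w) = complex.Re z - complex.Re w.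
  by case: z; case: w.
have ImB (z w : Cx) : complex.Im (z - w) = complex.Im z - complex.Im w.
  by case: z; case: w.
near=> t; rewrite (le_lt_trans (normc_le_ReIm _)) // ltcR ReB ImB [e]splitr.
rewrite ltrD //; near: t; [apply: cvRe | apply: cvIm]; by rewrite divr_gt0.
Unshelve. all: by end_near.
Qed.

Lemma ultra_bounded_cvgC {UG : UltraFilter G} {f : T -> Cn} {M : Rr} :
  (forall t, `|f t| <= M%:C) -> exists a : Cn, f @ G --> a.
Proof.
move=> fM.
have inM (g : T -> Rr) :
    (forall t, `|g t|%:C <= `|f t|) -> forall t, g t \in `[- M, M].
  by move=> gf t; rewrite in_itv /= -ler_norml -lecR (le_trans (gf t)).
have [lr cvRe] := ultra_cvg_compact UG (@segment_compact _ (- M) M)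
  (inM (fun t => complex.Re (f t)) (fun t => normc_ge_Re _)).
have [li cvIm] := ultra_cvg_compact UG (@segment_compact _ (- M) M)
  (inM (fun t => complex.Im (f t)) (fun t => normc_ge_Im _)).
by exists (lr +i* li); apply: cvgC_ReIm.
Qed.

End ComplexLimits.

Section GelfandDual.
Variables (X : Type) (E : set (set (X * X))) (B : set (set X)).
Variable A : set (X -> Cx).
Hypothesis HA : higson_dominated_alg E B A.

Lemma pmapE (x : X) (f : X -> Cx) : A f -> Defs.pmap A x f = f x.
Proof. by rewrite /Defs.pmap; case: pselect. Qed.

Lemma pmap_character (x : X) : character A (Defs.pmap A x).
Proof.
split=> [f||f g Af Ag|f g Af Ag|c f Af].
- by rewrite /Defs.pmap; case: pselect.
- by rewrite pmapE //; exact: hd_unit HA.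
- by rewrite !pmapE //; exact (hd_add HA Af Ag).
- by rewrite !pmapE //; exact (hd_mul HA Af Ag).
- by rewrite !pmapE //; exact (hd_scale HA c Af).
Qed.

Lemma character_eq (phi1 phi2 : (X -> Cx) -> Cx) :
  character A phi1 -> character A phi2 ->
  (forall f, A f -> phi1 f = phi2 f) -> phi1 = phi2.
Proof.
move=> [phi1_out _ _ _ _] [phi2_out _ _ _ _] eqA; apply: funext => f.
by have [/eqA //|nAf] := pselect (A f); rewrite phi1_out ?phi2_out.
Qed.

Variables (T : Type) (G : set_system T).

(* [p \o h] tends to [phi] along [G] in the weak-* topology of the dual. *)
Definition gelfand_cvg (h : T -> X) (phi : (X -> Cx) -> Cx) : Prop :=
  forall f, A f -> ((fun t => f (h t)) : T -> Cn) @ G --> (phi f : Cn).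

Lemma ultra_gelfand_cvg {UG : UltraFilter G} (h : T -> X) :
  exists phi, character A phi /\ gelfand_cvg h phi.
Proof.
have lim_ex f : exists l : Cx,
    (A f -> ((fun t => f (h t)) : T -> Cn) @ G --> (l : Cn)) /\
    (~ A f -> l = 0).
  have [Af|] := pselect (A f); last by exists 0.
  have [[M fM] _] := hd_upper HA Af.
  by have [l fl] := ultra_bounded_cvgC (fun t => fM (h t)); exists l.
have [phi phiP] := choice lim_ex.
have cvphi : gelfand_cvg h phi by move=> f /(proj1 (phiP f)).
exists phi; split=> //; split=> [f /(proj2 (phiP f)) //||||].
- exact: cvgC_unique (cvphi _ (hd_unit HA)) (cvg_cst _).
- move=> f g Af Ag; apply: (cvgC_unique (cvphi _ (hd_add HA Af Ag))).
  exact (cvgD (cvphi _ Af) (cvphi _ Ag)).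
- move=> f g Af Ag; apply: (cvgC_unique (cvphi _ (hd_mul HA Af Ag))).
  exact (cvgM (cvphi _ Af) (cvphi _ Ag)).
- move=> c f Af; apply: (cvgC_unique (cvphi _ (hd_scale HA c Af))).
  exact (cvgM (cvg_cst (c : Cn)) (cvphi _ Af)).
Qed.

Lemma gelfand_cvg_wopen {FG : Filter G} (h : T -> X) phi O :
  gelfand_cvg h phi -> Defs.wopen A O -> O phi ->
  \forall t \near G, O (Defs.pmap A (h t)).
Proof.
move=> cvphi [_ wO] /wO[fs [eps [eps0 Afs Ofs]]].
have : \forall t \near G, forall f, List.In f fs -> `|f (h t) - phi f| < eps%:C.
  by apply: filter_In_all => f /Afs /cvphi /cvgCP; apply.
apply: filterS => t near_fs.
apply: Ofs => [|f fs_f]; first exact: pmap_character.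
by rewrite pmapE; [exact: near_fs | exact: Afs].
Qed.

Lemma gelfand_cvg_boundary {FG : ProperFilter G} (h : T -> X) phi :
  character A phi -> gelfand_cvg h phi ->
  (forall S, B S -> \forall t \near G, ~ S (h t)) -> boundary B A phi.
Proof.
move=> cphi cvphi h_far; split=> // f f0.
apply: (cvgC_unique (cvphi _ (hd_lower HA f0))); apply/cvgCP_le => e e0.
have [S [BS fS]] := f0.2 e e0.
by apply: filterS (h_far S BS) => t /fS; rewrite subr0.
Qed.

Lemma gelfand_cvg_close {FG : ProperFilter G} (W : set (X * X)) (h1 h2 : T -> X)
    phi1 phi2 :
  E W -> character A phi1 -> character A phi2 ->
  gelfand_cvg h1 phi1 -> gelfand_cvg h2 phi2 ->
  (\forall t \near G, W (h1 t, h2 t)) ->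
  (forall S, B S -> \forall t \near G, ~ S (h1 t) /\ ~ S (h2 t)) -> phi1 = phi2.
Proof.
move=> EW c1 c2 cv1 cv2 near_W h_far; apply: character_eq => // f Af.
have [_ f_var] := hd_upper HA Af.
have cv_diff : ((fun t => f (h1 t) - f (h2 t)) : T -> Cn) @ G --> (0 : Cn).
  apply/cvgCP_le => e e0; have [S [BS fS]] := f_var W EW e e0.
  apply: filterS2 near_W (h_far S BS) => t Wt [? ?].
  by rewrite subr0; exact: fS.
apply: (cvgC_unique (cv1 f Af)); rewrite -[phi2 f]addr0.
apply: cvg_trans (cvgD (cv2 f Af) cv_diff); apply: near_eq_cvg.
by apply: filterE => t /=; rewrite addrC subrK.
Qed.

End GelfandDual.

Section PsiMorphism.
Variables (X : Type) (E : set (set (X * X))) (B : set (set X))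
  (A : set (X -> Cx)) (U : set ((X -> Cx) -> Cx))
  (r : ((X -> Cx) -> Cx) -> ((X -> Cx) -> Cx))
  (s : X -> Rr) (y0 : (X -> Cx) -> Cx).
Hypotheses (HBC : bornological_coarse E B) (HA : higson_dominated_alg E B A)
  (HU : nbhd_of A (boundary B A) U) (Hr : retraction A (boundary B A) U r)
  (s_ge0 : nonneg_fun s) (s_proper : proper_fun B s)
  (s_born : bornological_fun B s) (s_ctrl : controlled_fun E s)
  (y0Y : boundary B A y0).

Local Notation Y := (boundary B A).
Local Notation psi := (psi_map A U r s y0).

Lemma psi_boundary (x : X) : Y (psi x).2.
Proof.
by case: Hr => rY _ _; rewrite /psi_map /=; case: pselect => // Ux; exact: rY.
Qed.

Lemma psiE (x : X) : U (Defs.pmap A x) -> (psi x).2 = r (Defs.pmap A x).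
Proof. by rewrite /psi_map /=; case: pselect. Qed.

Lemma psi_proper (S : set (Rr * ((X -> Cx) -> Cx))) :
  OY_bdd Y S -> B (psi @^-1` S).
Proof.
move=> [_ [R0 SR0]].
have B_sR0 : B (s @^-1` [set t | 0 <= t <= R0]).
  by apply: s_proper => [t /andP[]|]; last by exists R0 => t /andP[].
by apply (bo_sub (bc_born HBC) B_sR0) => x /SR0 /= sR0; rewrite s_ge0.
Qed.

Lemma psi_near_diag (T : Type) (G : set_system T) {FG : Filter G}
    (h1 h2 : T -> X) phi V :
  Y phi -> gelfand_cvg A G h1 phi -> gelfand_cvg A G h2 phi ->
  diag_nbhd A Y V -> \forall t \near G, V ((psi (h1 t)).2, (psi (h2 t)).2).
Proof.
move=> Yphi cv1 cv2 [_ [O [[_ O_prod] O_diag OV]]].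
have [_ [OU [OU_open YOU OUU]]] := HU.
have [rY r_id r_cont] := Hr.
have [O1 [O2 [O1_open O2_open O1phi O2phi O12]]] := O_prod _ _ (O_diag _ Yphi).
have [O1' [O1'_open O1'E]] := r_cont O1 O1_open.
have [O2' [O2'_open O2'E]] := r_cont O2 O2_open.
have Uphi : U phi by apply/OUU/YOU.
have O1'phi : O1' phi by apply/(O1'E _ Uphi); rewrite r_id.
have O2'phi : O2' phi by apply/(O2'E _ Uphi); rewrite r_id.
have near_U1 := gelfand_cvg_wopen HA cv1 OU_open (YOU _ Yphi).
have near_U2 := gelfand_cvg_wopen HA cv2 OU_open (YOU _ Yphi).
have near_O1' := gelfand_cvg_wopen HA cv1 O1'_open O1'phi.
have near_O2' := gelfand_cvg_wopen HA cv2 O2'_open O2'phi.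
near=> t.
have U1 : U (Defs.pmap A (h1 t)) by apply: OUU; near: t; exact: near_U1.
have U2 : U (Defs.pmap A (h2 t)) by apply: OUU; near: t; exact: near_U2.
rewrite !psiE //; apply: OV; [exact: rY | exact: rY |]; apply: O12.
  by apply/(O1'E _ U1); near: t; exact: near_O1'.
by apply/(O2'E _ U2); near: t; exact: near_O2'.
Unshelve. all: by end_near.
Qed.

Lemma psi_far_diag (W : set (X * X)) V : E W -> diag_nbhd A Y V ->
  exists S0 : Rr, forall x x', W (x, x') -> S0 <= s x -> S0 <= s x' ->
    V ((psi x).2, (psi x').2).
Proof.
move=> EW VY; apply: contrapT => no_S0.
pose bad S0 := [set xx : X * X | [/\ W xx, S0 <= s xx.1, S0 <= s xx.2
  & ~ V ((psi xx.1).2, (psi xx.2).2)]].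
have [G [UG G_bad]] : exists G, UltraFilter G /\ forall S0, G (bad S0).
  apply: filter_from_ultra => [|i j|S0]; first by exists 0.
    exists (Num.max i j) => xx [Wxx].
    by rewrite !ge_max => /andP[i1 j1] /andP[i2 j2] nV; split; split.
  apply/set0P/negP => /eqP bad0; apply: no_S0.
  exists S0 => x x' Wxx s1 s2; apply: contrapT => nV.
  by have : bad S0 (x, x') by []; rewrite bad0.
have G_far S : B S -> \forall xx \near G, ~ S xx.1 /\ ~ S xx.2.
  move=> /s_born [R0 SR0]; apply: filterS (G_bad (R0 + 1)) => xx [_ s1 s2 _].
  have far_x x : R0 + 1 <= s x -> ~ S x by move=> sx /SR0; lra.
  by split; apply: far_x.
have [phi1 [c1 cv1]] := ultra_gelfand_cvg HA fst.
have [phi2 [c2 cv2]] := ultra_gelfand_cvg HA snd.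
have G_W : \forall xx \near G, W (xx.1, xx.2).
  by apply: filterS (G_bad 0) => -[x x'] [].
have e12 : phi1 = phi2.
  exact (gelfand_cvg_close HA EW c1 c2 cv1 cv2 G_W G_far).
have G_far1 S : B S -> \forall xx \near G, ~ S xx.1.
  by move/G_far; apply: filterS => ? [].
have Yphi1 : Y phi1 by exact (gelfand_cvg_boundary HA c1 cv1 G_far1).
rewrite -e12 in cv2.
have [xx [[_ _ _ nV] V_xx]] :=
  filter_ex (filterI (G_bad 0) (psi_near_diag Yphi1 cv1 cv2 VY)).
exact: nV.
Qed.

Lemma psi_controlled (W : set (X * X)) : E W ->
  OY_ent A Y [set zz | exists xx, W xx /\ zz = (psi xx.1, psi xx.2)].
Proof.
move=> EW; split.
- move=> _ _ [xx [_ [-> ->]]].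
  by split; split; [exact: s_ge0 | exact: psi_boundary
                   | exact: s_ge0 | exact: psi_boundary].
- have [K sK] := s_ctrl EW.
  by exists K => _ _ [[x x'] [Wxx [-> ->]]]; exact: sK.
- move=> V VY; have [S0 S0V] := psi_far_diag EW VY.
  by exists S0 => _ _ [[x x'] [Wxx [-> ->]]]; exact: S0V.
Qed.

End PsiMorphism.

Theorem lemma3p21 (X : Type) (E : set (set (X * X))) (B : set (set X))
  (A : set (X -> Cx)) (U : set ((X -> Cx) -> Cx))
  (r : ((X -> Cx) -> Cx) -> ((X -> Cx) -> Cx)) (s : X -> Rr)
  (y0 : (X -> Cx) -> Cx) :
  bornological_coarse E B ->
  higson_dominated_alg E B A ->
  nbhd_of A (boundary B A) U ->
  retraction A (boundary B A) U r ->
  nonneg_fun s -> proper_fun B s -> bornological_fun B s -> controlled_fun E s ->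
  boundary B A y0 ->
  bc_morphism E B (OY_ent A (boundary B A)) (OY_bdd (boundary B A))
    (psi_map A U r s y0).
Proof.
move=> HBC HA HU Hr s_ge0 s_proper s_born s_ctrl y0Y; split=> [W EW|S bdd_S].
- exact (psi_controlled HA HU Hr s_ge0 s_born s_ctrl y0Y EW).
- exact (psi_proper U r y0 HBC s_ge0 s_proper bdd_S).
Qed.
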